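(* Let $C$ be a complex scheme of even type and $p$ an odd prime. 1. If $\Lambda^-\not\equiv\Lambda^+\pmod p$, then $\mathfrak Z_{\vec c,p}$ has no edges, and each of its vertices is indexed by a region other than the outer region $R_1$. 2. If $\Lambda^-\equiv\Lambda^+\pmod p$, then: - $\mathfrak Z_{\vec c,p}$ contains $u_1,u_2,u_3$ and the edges $u_1u_2$ and $u_1u_3$; - $\mathfrak Z_{\vec c,p}$ contains $R_1$ and the edge $u_1R_1$ if and only if $\Pi^+_o-\Pi^-_o\equiv1\pmod p$ for every outer oval $o$; - $\mathfrak Z_{\vec c,p}$ contains no other edges, and its only other possible vertices are indexed by regions other than $R_1$.
   Context: A complex scheme $C$ in $\mathbb{R}P^2$ is a finite collection of disjoint smooth simple closed curves, up to isotopy, at most one of which is one-sided. The two-sided components are ovals, and $C$ carries a semi-orientation. $C$ has even type if it has no one-sided component; then an auxiliary oriented one-sided curve $J$ disjoint from the ovals is fixed. Numerical characteristics: - Regions are the components of $\mathbb{R}P^2\setminus(C\cup J)$, and the outer region $R_1$ is the one whose closure meets $J$. Outer ovals are those in the boundary of $R_1$. The parity $\mathrm{par}$ of a region or oval is the parity of the number of ovals crossed to reach $R_1$. - For an oval $o$ bounding a disk $D_o$ and $x\in\mathrm{int}D_o$, one has $[o]=\pm2[J]$ in $H_1(\mathbb{R}P^2\setminus\{x\})$; $o$ is negative if $[o]=2[J]$, positive otherwise, and $\epsilon(o)=\pm1$ accordingly. $\Lambda^\pm$ is the number of positive/negative ovals. - Two ovals form an injective pair if they bound an annulus. The pair is positive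 if their orientations are the boundary orientation of some orientation of the annulus, and negative otherwise. $\Pi^\pm_o$ is the number of ovals forming a positive/negative injective pair with $o$. $\Gamma=\Gamma(C)$ is the weighted tree with vertices $R$ (weight $2\chi(R)$) for each region, $o$ (weight $0$) for each oval, and $u_1,u_2,u_3$ (weights $1,2,2$). Its edges are $Ro$ for $o\subset\partial R$, and $u_1u_2$, $u_1u_3$, $u_1R_1$. In the even type case its arrows are one arrow at each oval $o$, of sign $(-1)^{\mathrm{par}(o)+1}\epsilon(o)$. $A_\Gamma$ has the weights on the diagonal and $1$ for adjacent vertices, $0$ otherwise. Derived quantities. - $\vec s$ has entry $\pm1$ at the tail of a $\pm$ arrow and $0$ elsewhere; $\vec c=-2\vec sA_\Gamma^{-1}$. - $\Gamma^+$ is obtained by converting arrows into edges and arrowheads into new weight-$0$ vertices, and $\vec c^{\,+}$ extends $\vec c$ by $\pm2$ (the arrow sign) at the new vertices. - $\mathfrak Z_{\vec c,p}$ is the subgraph of $\Gamma$ whose vertices are the $v\in v(\Gamma)$ with $\vec c_v\equiv0\pmod p$ that are not joined by an edge of $\Gamma^+$ to any $w$ with $\vec c^{\,+}_w\not\equiv0\pmod p$; its edges are the edges of $\Gamma$ among these vertices. *)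

From HB Require Import structures.
From mathcomp Require Import all_boot all_order all_algebra.
Set Implicit Arguments. Unset Strict Implicit. Unset Printing Implicit Defensive.
Import Order.TTheory GRing.Theory Num.Theory.
Local Open Scope ring_scope.

(* A complex scheme of even type with n ovals, indexed by 'I_n, is     *)
(* encoded (up to isotopy) by                                          *)
(*  - parent : 'I_n -> option 'I_n : parent o = Some o' iff o lies     *)
(*    immediately inside the disk D_o' (no oval in between);           *)
(*    parent o = None iff o is an outer oval;                          *)
(*  - eps : 'I_n -> bool : eps o = true iff o is positive (epsilon=+1),*)
(*    false iff o is negative ([o] = 2[J], epsilon = -1).              *)

Section Scheme.
Variables (n : nat) (parent : 'I_n -> option 'I_n) (eps : 'I_n -> bool).

Fixpoint itp (k : nat) (i : 'I_n) : option 'I_n :=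
  if k is k'.+1 then obind parent (itp k' i) else Some i.

(* j is a strict ancestor of i : the oval i lies inside the disk D_j *)
Definition anc (j i : 'I_n) : bool := [exists k : 'I_n, itp k.+1 i == Some j].

(* par(o): number of ovals crossed going from o to the outer region R_1 *)
Definition depth (i : 'I_n) : nat := #|[pred j | anc j i]|.

Definition outer (i : 'I_n) : bool := parent i == None.

Definition epsZ (o : 'I_n) : int := if eps o then 1 else -1.

Definition Lambda_pos : nat := #|[pred o | eps o]|.
Definition Lambda_neg : nat := #|[pred o | ~~ eps o]|.

(* injective pairs: one oval inside the disk of the other; the pair is
   positive iff the orientations are the boundary orientation of the
   annulus, which amounts to eps o != eps o'. *)
Definition injective_pair (o o' : 'I_n) : bool := anc o o' || anc o' o.
Definition positive_pair (o o' : 'I_n) : bool :=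
  injective_pair o o' && (eps o != eps o').
Definition negative_pair (o o' : 'I_n) : bool :=
  injective_pair o o' && (eps o == eps o').
Definition Pi_pos (o : 'I_n) : nat := #|[pred o' | positive_pair o o']|.
Definition Pi_neg (o : 'I_n) : nat := #|[pred o' | negative_pair o o']|.

End Scheme.

(* Vertices of Gamma: regions (Reg None = outer region R_1,            *)
(* Reg (Some i) = region inside D_i just outside the child disks),      *)
(* ovals, and u_1, u_2, u_3 (U 0, U 1, U 2).                           *)
Inductive vertex (n : nat) :=
  | Reg of option 'I_n
  | Ov of 'I_n
  | U of 'I_3.
Arguments Reg {n} _.
Arguments Ov {n} _.
Arguments U {n} _.

Section VertexFin.
Variable n : nat.
Definition vcode (v : vertex n) : (option 'I_n + 'I_n + 'I_3)%type :=
  match v with Reg r => inl (inl r) | Ov o => inl (inr o) | U a => inr a end.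
Definition vdecode (x : (option 'I_n + 'I_n + 'I_3)%type) : vertex n :=
  match x with inl (inl r) => Reg r | inl (inr o) => Ov o | inr a => U a end.
Lemma vcodeK : cancel vcode vdecode. Proof. by case. Qed.
HB.instance Definition _ := Finite.copy (vertex n) (can_type vcodeK).
End VertexFin.

Definition R1 {n} : vertex n := Reg None.
Definition u1 {n} : vertex n := U (@Ordinal 3 0 isT).
Definition u2 {n} : vertex n := U (@Ordinal 3 1 isT).
Definition u3 {n} : vertex n := U (@Ordinal 3 2 isT).

Section Gamma.
Variables (n : nat) (parent : 'I_n -> option 'I_n) (eps : 'I_n -> bool).

Definition bounds (r : option 'I_n) (o : 'I_n) : bool :=
  match r with
  | None => parent o == None
  | Some i => (o == i) || (parent o == Some i)
  end.

(* Euler characteristic of a region: R_1 is the disk RP^2 \ J minus the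
   outer closed disks; Reg (Some i) is the disk D_i minus the closed disks
   of the ovals immediately inside o_i. *)
Definition chi (r : option 'I_n) : int :=
  match r with
  | None => 1 - (#|[pred o | parent o == None]|)%:Z
  | Some i => 1 - (#|[pred o | parent o == Some i]|)%:Z
  end.

Definition weight (v : vertex n) : int :=
  match v with
  | Reg r => 2 * chi r
  | Ov _ => 0
  | U a => if val a == 0%N then 1 else 2
  end.

Definition isU0 (a : 'I_3) := val a == 0%N.
Definition adj (v w : vertex n) : bool :=
  match v, w with
  | Reg r, Ov o => bounds r o
  | Ov o, Reg r => bounds r o
  | U a, U b => (isU0 a && ~~ isU0 b) || (isU0 b && ~~ isU0 a)
  | U a, Reg None => isU0 a
  | Reg None, U a => isU0 a
  | _, _ => false
  end.

Definition NV := #|{: vertex n}|.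

Definition AGamma : 'M[rat]_NV :=
  \matrix_(i, j)
    (if enum_val i == enum_val j then (weight (enum_val i))%:~R
     else if adj (enum_val i) (enum_val j) then 1 else 0).

Definition asign (o : 'I_n) : int := (-1) ^+ (depth parent o).+1 * epsZ eps o.

Definition svec : 'rV[rat]_NV :=
  \row_j (match enum_val j with Ov o => (asign o)%:~R | _ => 0 end).

Definition cvec : 'rV[rat]_NV := (-2) *: (svec *m invmx AGamma).
Definition c (v : vertex n) : rat := cvec 0 (enum_rank v).

(* Gamma^+ : vertices of Gamma plus one arrowhead vertex per oval *)
Definition vertexp := (vertex n + 'I_n)%type.
Definition adjp (x y : vertexp) : bool :=
  match x, y with
  | inl v, inl w => adj v w
  | inl (Ov o), inr o' => o == o'
  | inr o', inl (Ov o) => o == o'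
  | _, _ => false
  end.
Definition cplus (x : vertexp) : rat :=
  match x with inl v => c v | inr o => (2 * asign o)%:~R end.

End Gamma.

(* congruence to 0 modulo p for a rational number (in Z_(p)) *)
Definition zero_mod (p : nat) (q : rat) : bool := (p%:Z %| numq q)%Z.

Section Zgraph.
Variables (n : nat) (parent : 'I_n -> option 'I_n) (eps : 'I_n -> bool) (p : nat).

Definition inZ (v : vertex n) : bool :=
  zero_mod p (c parent eps v) &&
  [forall w : vertexp n, adjp parent (inl v) w ==> zero_mod p (cplus parent eps w)].

Definition Zedge (v w : vertex n) : bool :=
  [&& inZ v, inZ w & adj parent v w].

End Zgraph.

From HB Require Import structures.
From mathcomp Require Import all_boot all_order all_algebra.
From mathcomp Require Import zify lra.
Import Order.TTheory GRing.Theory Num.Theory.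

(* The vector c solves c A_Gamma = -2 s.  Read at u_2, u_3 and u_1 this
   system gives c(u_2) = c(u_3) = -c(u_1)/2 and c(R_1) = 0; at an oval o it
   gives c(R) + c(R') = -2 sign(o) for the two regions adjacent to o.  An
   induction from the leaves of the nesting forest then shows
   (-1)^par(o) (c(o) + 2 c(R_o) + 4 sign(o)) = -4 (eps(o) + sum of eps over
   the ovals inside o), with R_o the region just inside o.  For an outer oval
   this is c(o) = -4 (eps(o) + ...), which up to a unit is
   Pi^+_o - Pi^-_o - 1, and summing the equation at R_1 over the outer ovals
   gives c(u_1) = 4 (Lambda^+ - Lambda^-).  Since p is odd, u_1, u_2, u_3 lie
   in Z iff p divides Lambda^+ - Lambda^-, while no oval does, because its
   arrowhead carries +-2. *)

Set Implicit Arguments.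
Unset Strict Implicit.
Unset Printing Implicit Defensive.

Section Forest.
Variables (n : nat) (parent : 'I_n -> option 'I_n) (d : 'I_n -> nat).
Hypothesis parent_rank : forall i j, parent i = Some j -> (d j < d i)%N.

Lemma itpD a b i : itp parent (a + b) i = obind (itp parent a) (itp parent b i).
Proof.
elim: a => [|a IH] /=; first by case: (itp parent b i).
by rewrite IH; case: (itp parent b i).
Qed.

Lemma itpSr k i : itp parent k.+1 i = obind (itp parent k) (parent i).
Proof. by rewrite -addn1 itpD. Qed.

Lemma itp_rank m i j : itp parent m i = Some j -> (d j + m <= d i)%N.
Proof.
elim: m j => [|m IH] j /=; first by case=> ->; rewrite addn0.
case E: (itp parent m i) => [x|] //= /parent_rank; have := IH x E; lia.
Qed.

Lemma itp_acyclic m i : itp parent m.+1 i <> Some i.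
Proof. by move/itp_rank; lia. Qed.

Lemma itp_ltn m i j : itp parent m i = Some j -> (m < n)%N.
Proof.
move=> Hm.
have itp_def k : (k <= m)%N -> exists x, itp parent k i = Some x.
  move=> km; case E: (itp parent k i) => [x|]; first by exists x.
  by move: Hm; rewrite -(subnK km) itpD E.
pose f (k : 'I_m.+1) : 'I_n := odflt i (itp parent k i).
have f_inj : injective f.
  suff f_lt (k1 k2 : 'I_m.+1) : (k1 < k2)%N -> f k1 != f k2.
    by move=> k1 k2 E; case: (ltngtP k1 k2) => [/f_lt|/f_lt|/val_inj //];
      rewrite E eqxx.
  move=> lt12; have [x1 E1] := itp_def k1 (ltnSE (ltn_ord k1)).
  have [x2 E2] := itp_def k2 (ltnSE (ltn_ord k2)).
  rewrite /f E1 E2 /=; apply/eqP => ex; subst x2.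
  by move: E2; rewrite -(subnK (ltnW lt12)) itpD E1 /= => /itp_rank; lia.
by have := leq_card f f_inj; rewrite !card_ord.
Qed.

Lemma ancP j i : reflect (exists m, itp parent m.+1 i = Some j) (anc parent j i).
Proof.
apply: (iffP existsP) => [[k /eqP H]|[m H]]; first by exists k.
by exists (Ordinal (ltnW (itp_ltn H))); apply/eqP.
Qed.

Lemma anc_parent o q j : parent o = Some q -> anc parent j o = (j == q) || anc parent j q.
Proof.
move=> Hq; apply/ancP/orP => [[m]|[/eqP->|/ancP[m Hm]]].
- rewrite itpSr Hq /=; case: m => [[->]|m Hm]; first by left.
  by right; apply/ancP; exists m.
- by exists 0; rewrite itpSr Hq.
- by exists m.+1; rewrite itpSr Hq.
Qed.

Lemma anc_outer o j : parent o = None -> anc parent j o = false.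
Proof. by move=> Ho; apply/existsP => -[m]; rewrite itpSr Ho. Qed.

Lemma anc_irr i : anc parent i i = false.
Proof. by apply/ancP => -[m /itp_acyclic]. Qed.

Lemma anc_trans a b c : anc parent a b -> anc parent b c -> anc parent a c.
Proof.
move=> /ancP[m1 H1] /ancP[m2 H2]; apply/ancP; exists (m1 + m2.+1).
by rewrite -addSn itpD H2.
Qed.

Lemma depth_parent o q : parent o = Some q -> depth parent o = (depth parent q).+1.
Proof.
move=> Hq; rewrite /depth (eq_card (B := [predU1 q & [pred j | anc parent j q]])).
  by rewrite cardU1 inE anc_irr.
by move=> j; rewrite !inE (anc_parent _ Hq).
Qed.

Lemma depth_outer o : parent o = None -> depth parent o = 0.
Proof. by move=> Ho; apply: eq_card0 => j; rewrite inE anc_outer. Qed.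

Lemma itp_parent_inj a b j o o' :
  itp parent a j = Some o -> itp parent b j = Some o' -> parent o = parent o' -> o = o'.
Proof.
wlog ab : a b o o' / (a <= b)%N.
  move=> W Ha Hb Ho; case: (leqP a b) => [|/ltnW] ab; first exact: W Ha Hb Ho.
  exact/esym/(W _ _ _ _ ab Hb Ha).
move=> Ha Hb Ho; case: ltngtP ab => // [lt|eab] _; last by move: Ha; rewrite eab Hb => -[].
move: Hb; rewrite -(subnK lt) itpD.
have -> : itp parent a.+1 j = parent o by rewrite /= Ha.
case Eo: (parent o) Ho => [q|] Ho //= Hb.
have : itp parent (b - a.+1).+1 q = Some q by rewrite /= Hb /= -Ho.
by move/itp_acyclic.
Qed.

(* [None] plays the role of the outer region R_1, a common root above all
   outer ovals. *)
Definition descendant (r : option 'I_n) (j : 'I_n) : bool :=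
  if r is Some i then anc parent i j else true.

Lemma descendant_child r j : descendant r j ->
  exists o, (parent o == r) && ((j == o) || anc parent o j).
Proof.
elim: {j}(d j) {-2}j (leqnn (d j)) r => [|k IH] j dj r Hr.
  case E: (parent j) => [y|]; first by have := parent_rank E; lia.
  case: r Hr => [i|] Hr; first by rewrite /= anc_outer in Hr.
  by exists j; rewrite E !eqxx.
case E: (parent j) => [y|]; last first.
  case: r Hr => [i|] Hr; first by rewrite /= anc_outer in Hr.
  by exists j; rewrite E !eqxx.
case: (eqVneq r (Some y)) => [->|ne]; first by exists j; rewrite E !eqxx.
have Hy : descendant r y.
  case: r Hr ne => [i|] //= Hr ne; rewrite (anc_parent _ E) in Hr.
  by case/orP: Hr => // /eqP ei; rewrite ei eqxx in ne.
have [|o /andP[Ho Hj]] := IH y _ r Hy; first by have := parent_rank E; lia.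
exists o; rewrite Ho /= (anc_parent _ E).
by case/orP: Hj => [/eqP->|->]; rewrite ?eqxx ?orbT.
Qed.

Lemma child_descendant r o j :
  parent o == r -> (j == o) || anc parent o j -> descendant r j.
Proof.
case: r => [i|] //= /eqP Ho Hj.
have Hio : anc parent i o by rewrite (anc_parent _ Ho) eqxx.
by case/orP: Hj => [/eqP->//|]; apply: anc_trans.
Qed.

Lemma child_ancestor_uniq r o o' j : parent o == r -> parent o' == r ->
  (j == o) || anc parent o j -> (j == o') || anc parent o' j -> o = o'.
Proof.
have itp_of k : (j == k) || anc parent k j -> exists a, itp parent a j = Some k.
  by case/orP => [/eqP->|/ancP[m H]]; [exists 0 | exists m.+1].
move=> /eqP H1 /eqP H2 /itp_of[a Ha] /itp_of[b Hb].
by apply: itp_parent_inj Ha Hb _; rewrite H1 H2.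
Qed.

Lemma sum_descendant (R : nmodType) (F : 'I_n -> R) r :
  (\sum_(j | descendant r j) F j =
   \sum_(o | parent o == r) (F o + \sum_(j | anc parent o j) F j))%R.
Proof.
pose h j := odflt j [pick o | (parent o == r) && ((j == o) || anc parent o j)].
have hP j : descendant r j -> (parent (h j) == r) && ((j == h j) || anc parent (h j) j).
  move=> Hj; rewrite /h; case: pickP => [o //|H0].
  by have [o Ho] := descendant_child Hj; rewrite H0 in Ho.
rewrite (partition_big h (fun o => parent o == r)); last by move=> j /hP /andP[].
apply: eq_bigr => o Ho.
rewrite (eq_bigl (fun j => (j == o) || anc parent o j)); last first.
  move=> j /=; apply/andP/idP => [[Hj /eqP <-]|Hj].
    by have /andP[_ ->] := hP j Hj.
  split; first exact: child_descendant Ho Hj.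
  have /andP[H1 H2] := hP j (child_descendant Ho Hj).
  by apply/eqP; exact: child_ancestor_uniq H1 Ho H2 Hj.
rewrite (bigD1 o) ?eqxx //=; congr (_ + _)%R; apply: eq_bigl => j.
by case: eqVneq => [->|_]; rewrite ?anc_irr ?andbT.
Qed.

Lemma children_ind (P : 'I_n -> Prop) :
  (forall i, (forall o, parent o = Some i -> P o) -> P i) -> forall i, P i.
Proof.
move=> IH; pose M := (\max_(j : 'I_n) d j)%N.
suff H k i : (M - d i <= k)%N -> P i by move=> i; exact: H _ i (leqnn _).
elim: k i => [|k IHk] i Hi; apply: IH => o Ho;
  have := parent_rank Ho; have : (d o <= M)%N := leq_bigmax o.
- lia.
- by move=> h1 h2; apply: IHk; lia.
Qed.

Lemma parent_ind (P : 'I_n -> Prop) :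
  (forall i, (forall q, parent i = Some q -> P q) -> P i) -> forall i, P i.
Proof.
move=> IH i; elim: {i}(d i) {-2}i (leqnn (d i)) => [|k IHk] i Hi;
  apply: IH => q /parent_rank; [lia | move=> h; apply: IHk; lia].
Qed.

End Forest.

Local Open Scope ring_scope.

Lemma U_cases n (a : 'I_3) : [\/ @U n a = u1, @U n a = u2 | @U n a = u3].
Proof.
by case: a => [[|[|[|m]]] Ha] //; [constructor 1 | constructor 2 | constructor 3];
  congr U; apply: val_inj.
Qed.

Section GammaSums.
Variables (n : nat) (parent : 'I_n -> option 'I_n) (Y : vertex n -> rat).

Lemma sum_vertex (F : vertex n -> rat) :
  \sum_v F v = \sum_r F (Reg r) + \sum_o F (Ov o) + \sum_a F (U a).
Proof.
have bij : {on [pred v : vertex n | true], bijective (@vdecode n)}.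
  by apply: onW_bij; exists (@vcode n); [case => [[]|] | exact: vcodeK].
by rewrite (reindex (@vdecode n) bij) big_sumType big_sumType.
Qed.

Lemma sum_option (F : option 'I_n -> rat) : \sum_r F r = F None + \sum_i F (Some i).
Proof.
rewrite (bigD1 None) //=; congr (_ + _).
rewrite (reindex_omap Some id) /=; last by case.
by apply: eq_bigl => i; rewrite eqxx.
Qed.

Lemma sum_ord3 (F : 'I_3 -> rat) :
  \sum_a F a =
  F (Ordinal (isT : 0 < 3)%N) + F (Ordinal (isT : 1 < 3)%N) + F (Ordinal (isT : 2 < 3)%N).
Proof.
rewrite !big_ord_recl big_ord0 addr0 addrA.
by congr (_ + _ + _); congr F; apply: val_inj.
Qed.

Lemma adj_irr v : adj parent v v = false.
Proof. by case: v => [[]|o|a] //=; case: (isU0 a). Qed.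

Lemma mulmx_AGamma (y : 'rV[rat]_(NV n)) w :
  (y *m AGamma parent) 0 (enum_rank w) =
  (weight parent w)%:~R * y 0 (enum_rank w) + \sum_(v | adj parent v w) y 0 (enum_rank v).
Proof.
rewrite mxE (reindex (@enum_rank _)); last first.
  by apply: onW_bij; exists enum_val; [exact: enum_rankK | exact: enum_valK].
rewrite (bigD1 w) //= mxE !enum_rankK eqxx mulrC; congr (_ + _).
rewrite [LHS]big_mkcond [RHS]big_mkcond; apply: eq_bigr => v _ /=.
rewrite mxE !enum_rankK; case: eqVneq => [->|_]; first by rewrite adj_irr.
by case: adj; rewrite ?mulr1 ?mulr0.
Qed.

Lemma sum_adj_Ov o : parent o <> Some o ->
  \sum_(v | adj parent v (Ov o)) Y v = Y (Reg (parent o)) + Y (Reg (Some o)).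
Proof.
move=> Hno; rewrite big_mkcond sum_vertex sum_option /= !big1_eq !addr0.
case E: (parent o) Hno => [q|] Hno /=; last first.
  by rewrite -big_mkcond /= (big_pred1 o) // => i; rewrite orbF eq_sym.
rewrite add0r (eq_bigr (fun i => (if i == o then Y (Reg (Some i)) else 0) +
                                (if i == q then Y (Reg (Some i)) else 0))).
  by rewrite big_split /= -!big_mkcond /= !big_pred1_eq addrC.
move=> i _; rewrite !(eq_sym _ i) (inj_eq Some_inj).
case: (eqVneq o i) => [eoi|noi]; case: (eqVneq q i) => [eqi|nqi];
  rewrite /= ?addr0 ?add0r //.
by case: Hno; rewrite eoi eqi.
Qed.

Lemma sum_adj_RegS i : parent i <> Some i ->
  \sum_(v | adj parent v (Reg (Some i))) Y v =
  Y (Ov i) + \sum_(o | parent o == Some i) Y (Ov o).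
Proof.
move=> Hi; rewrite big_mkcond sum_vertex sum_option /= !big1_eq add0r !addr0 /=.
rewrite -big_mkcond (bigD1 i) /= ?eqxx //; congr (_ + _); apply: eq_bigl => o.
by case: (eqVneq o i) => [->|_] /=; [apply/esym/eqP | rewrite andbT].
Qed.

Lemma sum_adj_R1 :
  \sum_(v | adj parent v R1) Y v = \sum_(o | parent o == None) Y (Ov o) + Y u1.
Proof.
by rewrite big_mkcond sum_vertex sum_option /= !big1_eq sum_ord3 -big_mkcond !add0r !addr0.
Qed.

Lemma sum_adj_u1 : \sum_(v | adj parent v u1) Y v = Y R1 + Y u2 + Y u3.
Proof.
by rewrite big_mkcond sum_vertex sum_option /= !big1_eq sum_ord3 /= !addr0 add0r !addrA.
Qed.

Lemma sum_adj_u23 a : ~~ isU0 a -> \sum_(v | adj parent v (U a)) Y v = Y u1.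
Proof.
move=> /negbTE Ha; rewrite big_mkcond sum_vertex sum_option /= !big1_eq sum_ord3 /=.
by rewrite Ha /= !addr0 !add0r.
Qed.

End GammaSums.

Definition vcoord n (y : 'rV[rat]_(NV n)) (v : vertex n) : rat := y 0 (enum_rank v).

Section Equations.
Variables (n : nat) (parent : 'I_n -> option 'I_n) (eps : 'I_n -> bool) (d : 'I_n -> nat).
Hypothesis parent_rank : forall i j, parent i = Some j -> (d j < d i)%N.
Variables (y : 'rV[rat]_(NV n)) (lam : rat).
Hypothesis Hy : y *m AGamma parent = lam *: svec parent eps.
Local Notation Y := (vcoord y).

Lemma eqn_at w : (weight parent w)%:~R * Y w + \sum_(v | adj parent v w) Y v =
  lam * (match w with Ov o => (asign parent eps o)%:~R | _ => 0 end).
Proof. by rewrite -mulmx_AGamma Hy !mxE enum_rankK. Qed.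

Lemma eqn_u23 a : ~~ isU0 a -> 2 * Y (U a) + Y u1 = 0.
Proof.
move=> Ha; have := eqn_at (U a); rewrite sum_adj_u23 // mulr0 /=.
by move: Ha; rewrite /isU0 => /negbTE->.
Qed.

Lemma vcoord_R1 : Y R1 = 0.
Proof.
have := eqn_at u1; rewrite sum_adj_u1 mulr0 /= mul1r.
have := eqn_u23 (a := @Ordinal 3 1 isT) isT; have := eqn_u23 (a := @Ordinal 3 2 isT) isT.
lra.
Qed.

Lemma eqn_Ov o : Y (Reg (parent o)) + Y (Reg (Some o)) = lam * (asign parent eps o)%:~R.
Proof.
have := eqn_at (Ov o); rewrite sum_adj_Ov ?mul0r ?add0r //.
by move/parent_rank; rewrite ltnn.
Qed.

Lemma eqn_RegS i : 2 * (1 - #|[pred o | parent o == Some i]|%:R) * Y (Reg (Some i))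
  + (Y (Ov i) + \sum_(o | parent o == Some i) Y (Ov o)) = 0.
Proof.
have := eqn_at (Reg (Some i)); rewrite sum_adj_RegS ?mulr0; last by move/parent_rank; rewrite ltnn.
by rewrite /= rmorphM rmorphB.
Qed.

Lemma eqn_R1 : \sum_(o | parent o == None) Y (Ov o) + Y u1 = 0.
Proof. by have := eqn_at R1; rewrite sum_adj_R1 mulr0 vcoord_R1 mulr0 add0r. Qed.

End Equations.

Section Invertibility.
Variables (n : nat) (parent : 'I_n -> option 'I_n) (eps : 'I_n -> bool) (d : 'I_n -> nat).
Hypothesis parent_rank : forall i j, parent i = Some j -> (d j < d i)%N.

Lemma AGamma_kernel (y : 'rV[rat]_(NV n)) : y *m AGamma parent = 0 -> y = 0.
Proof.
move=> Hy0; have Hy : y *m AGamma parent = 0 *: svec parent eps by rewrite scale0r.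
have HR1 := vcoord_R1 Hy.
have HR i : vcoord y (Reg (Some i)) = 0.
  elim/(parent_ind parent_rank): i => i IH; have := eqn_Ov parent_rank Hy i.
  rewrite mul0r; case E: (parent i) => [q|]; last by rewrite HR1 add0r.
  by rewrite (IH q) // add0r.
have HO i : vcoord y (Ov i) = 0.
  elim/(children_ind parent_rank): i => i IH; have := eqn_RegS parent_rank Hy i.
  by rewrite HR mulr0 add0r big1 ?addr0 // => o /eqP /IH.
have Hu1 : vcoord y u1 = 0.
  by have := eqn_R1 Hy; rewrite big1 ?add0r // => o _; apply: HO.
have Hu23 a : ~~ isU0 a -> vcoord y (U a) = 0.
  by move=> /(eqn_u23 Hy); rewrite Hu1 addr0 => /eqP; rewrite mulf_eq0 => /orP[|/eqP].
suff Hv v : vcoord y v = 0 by apply/rowP => j; rewrite mxE -(enum_valK j) -[LHS]/(vcoord y _).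
case: v => [[i|]|o|a]; [exact: HR | exact: HR1 | exact: HO |].
by case: (U_cases n a) => ->; [exact: Hu1 | exact: Hu23 | exact: Hu23].
Qed.

Lemma AGamma_unit : AGamma parent \in unitmx.
Proof.
by rewrite unitmxE unitfE; apply/det0P => -[v /eqP nz /AGamma_kernel].
Qed.

Lemma cvec_mulmx : cvec parent eps *m AGamma parent = (-2) *: svec parent eps.
Proof. by rewrite /cvec -scalemxAl mulmxKV // AGamma_unit. Qed.

End Invertibility.

Section Counting.
Variables (n : nat) (parent : 'I_n -> option 'I_n) (eps : 'I_n -> bool).

Lemma sum_epsZ (P : pred 'I_n) : \sum_(j | P j) epsZ eps j =
  #|[pred j | P j && eps j]|%:Z - #|[pred j | P j && ~~ eps j]|%:Z.
Proof.
rewrite (bigID (fun j => eps j)) /=.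
rewrite (eq_bigr (fun _ => 1)); last by move=> j /andP[_]; rewrite /epsZ => ->.
rewrite [X in _ + X](eq_bigr (fun _ => -1)); last first.
  by move=> j /andP[_]; rewrite /epsZ => /negbTE ->.
rewrite !sumr_const (eq_card (B := [pred j | P j && eps j])) //.
rewrite [X in _ + _ *+ X](eq_card (B := [pred j | P j && ~~ eps j])) //.
by rewrite mulNrn !natz.
Qed.

Definition Lambda_diff : int := (Lambda_pos eps)%:Z - (Lambda_neg eps)%:Z.

Lemma sum_epsZ_Lambda : \sum_j epsZ eps j = Lambda_diff.
Proof. exact: (sum_epsZ predT). Qed.

Definition desc_eps (i : 'I_n) : int := \sum_(j | anc parent i j) epsZ eps j.

Lemma Pi_outer o : parent o = None ->
  (Pi_pos parent eps o)%:Z - (Pi_neg parent eps o)%:Z = - epsZ eps o * desc_eps o.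
Proof.
move=> Ho; rewrite /desc_eps sum_epsZ /Pi_pos /Pi_neg.
have pair_card (pair : bool -> bool) :
    #|[pred o' | injective_pair parent o o' && pair (eps o')]| =
    #|[pred j | anc parent o j && pair (eps j)]|.
  by apply: eq_card => j; rewrite !inE /injective_pair (anc_outer _ Ho) orbF.
rewrite (pair_card (fun b => eps o != b)) (pair_card (fun b => eps o == b)) /epsZ.
case: (eps o); rewrite ?mulN1r ?mul1r ?opprB; congr (_%:Z - _%:Z).
all: by apply: eq_card => j; rewrite !inE; case: (eps j).
Qed.

End Counting.

Section Cvalues.
Variables (n : nat) (parent : 'I_n -> option 'I_n) (eps : 'I_n -> bool) (d : 'I_n -> nat).
Hypothesis parent_rank : forall i j, parent i = Some j -> (d j < d i)%N.
Let Hc := cvec_mulmx eps parent_rank.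
Local Notation c := (c parent eps).
Local Notation sg i := ((-1) ^+ depth parent i : rat).
Local Notation a i := ((asign parent eps i)%:~R : rat).

Lemma vcoord_cvec v : vcoord (cvec parent eps) v = c v.
Proof. by []. Qed.

Lemma sign_asign i : sg i * a i = - (epsZ eps i)%:~R.
Proof. by rewrite /asign rmorphM rmorphXn rmorphN1 exprS mulN1r mulNr mulrN signrMK. Qed.

Lemma sign_child o i : parent o = Some i -> sg o = - sg i.
Proof. by move/(depth_parent parent_rank)->; rewrite exprS mulN1r. Qed.

(* By the equations at [Reg (Some i)] and at the children of [i], the
   bracket equals [4 a i] minus its sum over the children. *)
Lemma c_oval_inside i :
  sg i * (c (Ov i) + 2 * c (Reg (Some i)) + 4 * a i) =
  -4 * (epsZ eps i + desc_eps parent eps i)%:~R.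
Proof.
elim/(children_ind parent_rank): i => i IH.
set W := fun o => c (Ov o) + 2 * c (Reg (Some o)) + 4 * a o.
have c_child o : parent o == Some i -> c (Ov o) = W o + 2 * c (Reg (Some i)).
  by move=> /eqP Ho; have := eqn_Ov parent_rank Hc o; rewrite Ho !vcoord_cvec /W; lra.
have := eqn_RegS parent_rank Hc i; rewrite !vcoord_cvec (eq_bigr _ c_child) big_split /= sumr_const.
rewrite (eq_card (B := [pred o | parent o == Some i])) // -mulr_natl => HS.
have -> : c (Ov i) + 2 * c (Reg (Some i)) + 4 * a i =
    4 * a i - \sum_(o | parent o == Some i) W o by lra.
have sum_children : \sum_(o | parent o == Some i) sg i * W o =
    \sum_(o | parent o == Some i) 4 * (epsZ eps o + desc_eps parent eps o)%:~R.
  apply: eq_bigr => o /eqP Ho.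
  by rewrite -[sg i]opprK -(sign_child Ho) mulNr IH // mulNr opprK.
rewrite mulrBr mulrCA sign_asign mulr_sumr sum_children -mulr_sumr -rmorph_sum.
rewrite /desc_eps -(sum_descendant parent_rank _ (Some i)) rmorphD /=; lra.
Qed.

Lemma c_R1 : c R1 = 0.
Proof. exact: vcoord_R1 Hc. Qed.

Lemma c_outer o : parent o = None -> c (Ov o) = (-4 * (epsZ eps o + desc_eps parent eps o))%:~R.
Proof.
move=> Ho; have := c_oval_inside o; rewrite (depth_outer Ho) expr0 mul1r.
have := eqn_Ov parent_rank Hc o; rewrite Ho !vcoord_cvec c_R1 add0r rmorphM /=; lra.
Qed.

Lemma c_u1 : c u1 = (4 * Lambda_diff eps)%:~R.
Proof.
have := eqn_R1 Hc; rewrite !vcoord_cvec.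
rewrite (eq_bigr _ (fun o (Ho : parent o == None) => c_outer (eqP Ho))) -rmorph_sum -mulr_sumr.
have := sum_descendant parent_rank (epsZ eps) None; rewrite /desc_eps /= => <-.
rewrite sum_epsZ_Lambda !rmorphM /=; lra.
Qed.

Lemma c_u23 a : ~~ isU0 a -> c (U a) = (-2 * Lambda_diff eps)%:~R.
Proof.
move=> Ha; have := eqn_u23 Hc Ha; have := c_u1; rewrite !vcoord_cvec !rmorphM /=; lra.
Qed.

End Cvalues.

Section ZeroSet.
Variables (n : nat) (parent : 'I_n -> option 'I_n) (eps : 'I_n -> bool) (d : 'I_n -> nat).
Hypothesis parent_rank : forall i j, parent i = Some j -> (d j < d i)%N.
Variables (p : nat) (p_prime : prime p) (p_odd : odd p).
Local Notation inZ := (inZ parent eps p).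
Local Notation c := (c parent eps).
Local Notation D := (Lambda_diff eps).

Lemma odd_prime_ndvd_pow2 k : ~~ (p %| 2 ^ k)%N.
Proof. by rewrite Euclid_dvdX // dvdn_prime2 //; case: eqP p_odd => // ->. Qed.

Lemma dvdz_mull_ndvd (k z : int) : ~~ (p %| `|k|)%N -> (p%:Z %| k * z)%Z = (p%:Z %| z)%Z.
Proof. by move=> Hk; rewrite !dvdzE abszM /= Euclid_dvdM // (negbTE Hk). Qed.

Lemma zero_mod_int (z : int) : zero_mod p z%:~R = (p%:Z %| z)%Z.
Proof. by rewrite /zero_mod numq_int. Qed.

Lemma eqn_mod_Lambda : Lambda_neg eps = Lambda_pos eps %[mod p] <-> (p%:Z %| D)%Z.
Proof. by rewrite /Lambda_diff -eqz_mod_dvd !modz_nat eqz_nat; split=> [->|/eqP]. Qed.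

Lemma Ov_notin_Z o : ~~ inZ (Ov o).
Proof.
apply/nandP; right; apply/negP => /forallP /(_ (inr o)); rewrite /= eqxx zero_mod_int.
rewrite dvdz_mull_ndvd ?(odd_prime_ndvd_pow2 1) // dvdzE /asign abszMsign.
by have := odd_prime_ndvd_pow2 0; rewrite /epsZ; case: (eps o) => /negbTE->.
Qed.

Lemma zero_mod_c_U a : zero_mod p (c (U a)) = (p%:Z %| D)%Z.
Proof.
case: (U_cases n a) => ->.
- by rewrite (c_u1 _ parent_rank) zero_mod_int dvdz_mull_ndvd ?(odd_prime_ndvd_pow2 2).
- by rewrite (c_u23 _ parent_rank) // zero_mod_int dvdz_mull_ndvd ?(odd_prime_ndvd_pow2 1).
- by rewrite (c_u23 _ parent_rank) // zero_mod_int dvdz_mull_ndvd ?(odd_prime_ndvd_pow2 1).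
Qed.

Lemma inZ_U a : inZ (U a) = (p%:Z %| D)%Z.
Proof.
rewrite /inZ zero_mod_c_U; apply: andb_idr => HD.
apply/forallP => -[[[i|]|o|b]|o] //=; rewrite implybE ?zero_mod_c_U ?HD ?orbT //.
by rewrite (c_R1 _ parent_rank) /zero_mod dvdz0 orbT.
Qed.

Lemma inZ_R1 : inZ R1 <->
  (forall o, outer parent o -> zero_mod p (c (Ov o))) /\ (p%:Z %| D)%Z.
Proof.
rewrite /inZ (c_R1 _ parent_rank) {1}/zero_mod dvdz0 /=; split.
- move=> /forallP H; split; last by have := H (inl u1); rewrite /= zero_mod_c_U.
  by move=> o Ho; have := H (inl (Ov o)); rewrite /= -/(outer parent o) Ho.
- move=> [Hout HD]; apply/forallP => -[[[i|]|o|b]|o] //=; first exact/implyP/Hout.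
  by rewrite zero_mod_c_U HD implybT.
Qed.

Lemma zero_mod_c_outer o : outer parent o -> zero_mod p (c (Ov o)) =
  ((Pi_pos parent eps o)%:Z - (Pi_neg parent eps o)%:Z == 1 %[mod p%:Z])%Z.
Proof.
move=> /eqP Ho; have eps_unit : (`|epsZ eps o| = 1)%N by rewrite /epsZ; case: (eps o).
rewrite (c_outer _ parent_rank Ho) zero_mod_int dvdz_mull_ndvd ?(odd_prime_ndvd_pow2 2) //.
rewrite eqz_mod_dvd (Pi_outer _ Ho).
have -> : - epsZ eps o * desc_eps parent eps o - 1 =
          - epsZ eps o * (epsZ eps o + desc_eps parent eps o).
  by rewrite /epsZ; case: (eps o); lia.
by rewrite dvdz_mull_ndvd // abszN eps_unit (odd_prime_ndvd_pow2 0).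
Qed.

Lemma inZ_cases v : inZ v -> v \in [:: u1; u2; u3; R1] \/ exists i, v = Reg (Some i).
Proof.
case: v => [[i|]|o|a] Hv; first by right; exists i.
- by left; rewrite !inE eqxx !orbT.
- by rewrite (negbTE (Ov_notin_Z o)) in Hv.
- by left; case: (U_cases n a) => ->; rewrite !inE eqxx ?orbT.
Qed.

Lemma Zedge_cases v w : Zedge parent eps p v w ->
  [set v; w] \in [:: [set u1; u2]; [set u1; u3]; [set u1; R1]].
Proof.
move=> /and3P[/inZ_cases Hv /inZ_cases Hw].
case: Hv => [Hv|[i ->]]; case: Hw => [Hw|[j ->]] //.
- rewrite !inE in Hv Hw; case/or4P: Hv => /eqP->; case/or4P: Hw => /eqP-> //= _;
  by rewrite ?(setUC [set _] [set u1]) !inE eqxx ?orbT.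
- by rewrite !inE in Hv; case/or4P: Hv => /eqP->.
- by rewrite !inE in Hw; case/or4P: Hw => /eqP->.
Qed.

End ZeroSet.

Theorem proposition1p9 (n : nat) (parent : 'I_n -> option 'I_n) (eps : 'I_n -> bool)
  (Hforest : exists d : 'I_n -> nat, forall i j, parent i = Some j -> (d j < d i)%N)
  (p : nat) (Hp : prime p) (Hodd : odd p) :
  (Lambda_neg eps <> Lambda_pos eps %[mod p] ->
     (forall v w : vertex n, ~~ Zedge parent eps p v w) /\
     (forall v : vertex n, inZ parent eps p v -> exists i, v = Reg (Some i)))
  /\
  (Lambda_neg eps = Lambda_pos eps %[mod p] ->
     [/\ [/\ inZ parent eps p u1, inZ parent eps p u2 & inZ parent eps p u3],
         Zedge parent eps p u1 u2 /\ Zedge parent eps p u1 u3,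
         (inZ parent eps p R1 /\ Zedge parent eps p u1 R1 <->
            (forall o : 'I_n, outer parent o ->
               ((Pi_pos parent eps o)%:Z - (Pi_neg parent eps o)%:Z == 1 %[mod p%:Z])%Z)),
         (forall v w : vertex n, Zedge parent eps p v w ->
            [set v; w] \in [:: [set u1; u2]; [set u1; u3]; [set u1; R1]]) &
         (forall v : vertex n, inZ parent eps p v ->
            v \in [:: u1; u2; u3; R1] \/ exists i, v = Reg (Some i))]).
Proof.
case: Hforest => d Hd; have inZ_U := inZ_U eps Hd Hp Hodd.
have inZ_R1 := inZ_R1 eps Hd Hp Hodd; have outer_c := zero_mod_c_outer eps Hd Hp Hodd.
have [Lambda_dvd dvd_Lambda] := eqn_mod_Lambda eps p.
split=> [/(contra_not dvd_Lambda) HD | /Lambda_dvd HD].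
- have inZ_inner v : inZ parent eps p v -> exists i, v = Reg (Some i).
    move=> Hv; have [|//] := inZ_cases Hp Hodd Hv.
    by rewrite !inE => /or4P[] /eqP Ev; move: Hv; rewrite Ev ?inZ_U // => /inZ_R1[].
  by split=> // v w; apply/and3P => -[/inZ_inner[i ->] /inZ_inner[j ->]].
- have UZ a : inZ parent eps p (U a) by rewrite inZ_U.
  have [U1 U2 U3] : [/\ inZ parent eps p u1, inZ parent eps p u2 & inZ parent eps p u3].
    by split; apply: UZ.
  split=> //; first by rewrite /Zedge U1 U2 U3.
  + split=> [[/inZ_R1[Hout _] _] o Ho | Hout]; first by rewrite -outer_c ?Hout.
    have R1Z : inZ parent eps p R1 by apply/inZ_R1; split=> // o Ho; rewrite outer_c ?Hout.
    by rewrite /Zedge U1 R1Z.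
  + exact: Zedge_cases Hp Hodd.
  + exact: inZ_cases Hp Hodd.
Qed.
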